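(* Fix $i\in\{1,\ldots,N\}$, a DFA mode $q$ and an atomic-proposition formula $\alpha^i$. Suppose $\hat{\mathbf{M}}^i\preceq^{\delta^i}_0\mathbf{M}^i$ with relation $\mathscr{R}^i$, interface $\mathcal U_i$ and lifted kernel $\mathbb{W}_{\mathbb{T}^i}$, and let $\pi^i_q:\hat{\mathbb{X}}_i\to\hat{\mathbb{U}}_i$ be given. Let $v^{(i)}(\cdot,\cdot,q):\hat{\mathbb{X}}_i\times\mathbb{X}_i\to[0,1]$ and $v^{(i)}(\cdot,q):\hat{\mathbb{X}}_i\to[0,1]$ satisfy $v^{(i)}(\hat x_i,x_i,q)\ge v^{(i)}(\hat x_i,q)$ for all $(\hat x_i,x_i)\in\mathscr{R}^i$. Then for all $(\hat x_i,x_i)\in\mathscr{R}^i$, $$\mathbf{T}^{\pi^i_q}_{\alpha^i}(v^{(i)})(\hat x_i,x_i,q)\;\ge\;\mathbf{T}^{\pi^i_q}_{\delta^i,\alpha^i}(v^{(i)})(\hat x_i,q).$$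
   Context: Agent $\mathbf{M}^i=(\mathbb{X}_i,\mathbb{U}_i,\mathbb{Y}_i,\mathbb{T}_i,x_{i,0},h_i)$ and its abstraction $\hat{\mathbf{M}}^i=(\hat{\mathbb{X}}_i,\hat{\mathbb{U}}_i,\hat{\mathbb{Y}}_i,\hat{\mathbb{T}}_i,\hat x_{i,0},\hat h_i)$ are general Markov decision processes: Polish state and input spaces, a metric output space, a stochastic kernel $\mathbb{T}(\cdot\mid x,u)$, an initial state and a measurable output map. $\hat{\mathbf{M}}^i\preceq^{\delta}_{\epsilon}\mathbf{M}^i$ means that there exist: - a measurable relation $\mathscr{R}^i\subset\hat{\mathbb{X}}_i\times\mathbb{X}_i$; - an interface $\mathcal U_i:\hat{\mathbb{U}}_i\times\hat{\mathbb{X}}_i\times\mathbb{X}_i\to\mathcal{P}(\mathbb{U}_i)$; - a kernel $\mathbb{W}_{\mathbb{T}^i}(\cdot\mid\hat u,\hat x,x)$ on $\hat{\mathbb{X}}_i\times\mathbb{X}_i$; such that: - $(\hat x_{i,0},x_{i,0})\in\mathscr{R}^i$; - $d_{\mathbb{Y}_i}(\hat h_i(\hat x),h_i(x))\le\epsilon$ on $\mathscr{R}^i$; - for every $\hat u$ and every $(\hat x,x)\in\mathscr{R}^i$, $\mathbb{W}_{\mathbb{T}^i}(\cdot\mid\hat u,\hat x,x)$ has first marginal $\hat{\mathbb{T}}_i(\cdot\mid\hat x,\hat u)$, has second marginal $\mathbb{T}_i(\cdot\mid x,\mathcal U_i(\hat u,\hat x,x))$, and satisfies $\mathbb{W}_{\mathbb{T}^i}(\mathscr{R}^i\mid\hat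 u,\hat x,x)\ge1-\delta$. $\alpha^i$ is a conjunction of (possibly negated) atomic propositions from $\mathrm{AP}_i$. With labelling map $L^i:\mathbb{Y}_i\to2^{\mathrm{AP}_i}$, the indicator $\mathcal L_{\alpha^i}(\hat x_i)$ equals $1$ if $L^i(\hat h_i(\hat x_i))\models\alpha^i$ and $0$ otherwise. Coupled operator: $$\mathbf{T}^{\pi^i_q}_{\alpha^i}(v^{(i)})(\hat x_i,x_i,q)=\int\mathcal L_{\alpha^i}(\hat x_i')\,v^{(i)}(\hat x_i',x_i',q)\,\mathbb{W}_{\mathbb{T}^i}\big(d\hat x_i'\times dx_i'\mid\pi^i_q(\hat x_i),\hat x_i,x_i\big).$$ Abstract operator: $$\mathbf{T}^{\pi^i_q}_{\alpha^i}(v^{(i)})(\hat x_i,q)=\mathbb{E}\big[\mathcal L_{\alpha^i}(\hat x_i')v^{(i)}(\hat x_i',q)\big],\qquad \hat x_i'\sim\hat{\mathbb{T}}_i(\cdot\mid\hat x_i,\pi^i_q(\hat x_i)).$$ Robust operator: $$\mathbf{T}^{\pi^i_q}_{\delta^i,\alpha^i}(v^{(i)})(\hat x_i,q)=\mathbf L\big(\mathbf{T}^{\pi^i_q}_{\alpha^i}(v^{(i)})(\hat x_i,q)-\delta^i\big),$$ where $\mathbf L(a)=\min\{1,\max\{0,a\}\}$ is truncation to $[0,1]$. *)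

From HB Require Import structures.
From mathcomp Require Import all_boot all_order all_algebra.
From mathcomp Require Import all_classical all_reals all_analysis.
From Stdlib Require List.
Set Implicit Arguments. Unset Strict Implicit. Unset Printing Implicit Defensive.
Import Order.TTheory GRing.Theory Num.Theory.
Local Open Scope classical_set_scope.
Local Open Scope ring_scope.

Definition is_metric (R : realType) (Y : Type) (dY : Y -> Y -> R) : Prop :=
  [/\ forall a b, 0 <= dY a b,
      forall a b, dY a b = 0 <-> a = b,
      forall a b, dY a b = dY b a &
      forall a b c, dY a c <= dY a b + dY b c].

(* a conjunction of (possibly negated) atomic propositions: list of literals
   (p, true) = p, (p, false) = ~ p *)
Definition conj_formula (AP : Type) := seq (AP * bool).

Definition sat_conj (AP : Type) (l : set AP) (alpha : conj_formula AP) : Prop :=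
  forall lit, List.In lit alpha -> (l lit.1 <-> lit.2 = true).

Definition Lind (R : realType) (Xh Y AP : Type) (hh : Xh -> Y) (L : Y -> set AP)
  (alpha : conj_formula AP) (xh : Xh) : R :=
  if `[< sat_conj (L (hh xh)) alpha >] then 1 else 0.

Definition trunc01 (R : realType) (a : R) : R := Num.min 1 (Num.max 0 a).

Definition sim_rel (R : realType)
  {dX dU dXh dUh dY : measure_display}
  {X : measurableType dX} {U : measurableType dU}
  {Xh : measurableType dXh} {Uh : measurableType dUh} {Y : measurableType dY}
  (dist : Y -> Y -> R)
  (T : R.-pker (X * U)%type ~> X) (x0 : X) (h : X -> Y)
  (Th : R.-pker (Xh * Uh)%type ~> Xh) (xh0 : Xh) (hh : Xh -> Y)
  (eps delta : R)
  (Rel : set (Xh * X)) (Uif : Uh -> Xh -> X -> probability U R)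
  (W : Uh -> Xh -> X -> probability (Xh * X)%type R) : Prop :=
  [/\ measurable Rel,
      Rel (xh0, x0),
      (forall xh x, Rel (xh, x) -> dist (hh xh) (h x) <= eps) &
      (forall uh xh x, Rel (xh, x) ->
         [/\ (forall A, measurable A -> W uh xh x (A `*` setT) = Th (xh, uh) A),
             (forall B, measurable B ->
                W uh xh x (setT `*` B) = (\int[Uif uh xh x]_u T (x, u) B)%E) &
             (W uh xh x Rel >= (1 - delta)%:E)%E])].

Definition Tcoupled (R : realType)
  {dX dXh : measure_display} {X : measurableType dX} {Xh : measurableType dXh}
  {Uh Y AP Q : Type} (hh : Xh -> Y) (L : Y -> set AP) (alpha : conj_formula AP)
  (W : Uh -> Xh -> X -> probability (Xh * X)%type R) (pi : Xh -> Uh)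
  (v : Xh -> X -> Q -> R) (xh : Xh) (x : X) (q : Q) : R :=
  Rintegral (W (pi xh) xh x) setT
    (fun z : Xh * X => Lind R hh L alpha z.1 * v z.1 z.2 q).

Definition Tabs (R : realType)
  {dXh dUh : measure_display} {Xh : measurableType dXh} {Uh : measurableType dUh}
  {Y AP Q : Type} (hh : Xh -> Y) (L : Y -> set AP) (alpha : conj_formula AP)
  (Th : R.-pker (Xh * Uh)%type ~> Xh) (pi : Xh -> Uh)
  (v : Xh -> Q -> R) (xh : Xh) (q : Q) : R :=
  Rintegral (Th (xh, pi xh)) setT (fun y => Lind R hh L alpha y * v y q).

Definition Trobust (R : realType)
  {dXh dUh : measure_display} {Xh : measurableType dXh} {Uh : measurableType dUh}
  {Y AP Q : Type} (hh : Xh -> Y) (L : Y -> set AP) (alpha : conj_formula AP)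
  (Th : R.-pker (Xh * Uh)%type ~> Xh) (pi : Xh -> Uh) (delta : R)
  (v : Xh -> Q -> R) (xh : Xh) (q : Q) : R :=
  trunc01 (Tabs hh L alpha Th pi v xh q - delta).

From HB Require Import structures.
From mathcomp Require Import all_boot all_order all_algebra.
From mathcomp Require Import all_classical all_reals all_analysis.
From mathcomp Require Import measurable_realfun lra.
Import Order.TTheory GRing.Theory Num.Theory.
Set Implicit Arguments. Unset Strict Implicit. Unset Printing Implicit Defensive.
Local Open Scope classical_set_scope.
Local Open Scope ring_scope.

(** The first marginal of the coupling [W] is the abstract kernel, so the
abstract operator is the [W]-expectation of [L(xh') v(xh', q)].  On the
relation this integrand is dominated by the coupled integrand
[L(xh') v(xh', x', q)]; off the relation it is at most [1], and [W] charges
the complement of the relation with mass at most [delta].  Hence the coupled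
operator is at least the abstract one minus [delta], and being nonnegative it
dominates the truncation as well. *)

Section measure_integral.
Context {R : realType}.

Lemma Rintegral_indic {d} {T : measurableType d} (mu : {measure set T -> \bar R})
    (D S : set T) :
  measurable D -> measurable S ->
  \int[mu]_(x in D) \1_S x = fine (mu (S `&` D)).
Proof. by move=> mD mS; rewrite /Rintegral integral_indic. Qed.

Lemma Rintegral_fst {d1 d2} {X : measurableType d1} {Y : measurableType d2}
    (mu : {measure set (X * Y)%type -> \bar R}) (nu : {measure set X -> \bar R})
    (f : X -> R) :
  (forall A, measurable A -> mu (A `*` setT) = nu A) ->
  measurable_fun setT f -> (forall x, 0 <= f x) ->
  \int[mu]_(z in setT) f z.1 = \int[nu]_(x in setT) f x.
Proof.
move=> mu_nu mf f0; rewrite /Rintegral; congr fine.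
rewrite [RHS](eq_measure_integral (pushforward mu fst)); last first.
  move=> A mA _; rewrite /pushforward -mu_nu //; congr (mu _).
  by apply/seteqP; split => -[x y] //= [].
rewrite [RHS]ge0_integral_pushforward ?preimage_setT //.
- exact/measurable_EFinP.
- by move=> x _; rewrite lee_fin.
Qed.

End measure_integral.

Section probability_integral.
Context {R : realType} {d} {T : measurableType d} (P : probability T R).

Lemma integrable_bounded (f : T -> R) (M : R) : measurable_fun setT f ->
  (forall x, `|f x| <= M) -> P.-integrable setT (EFin \o f).
Proof.
move=> mf fM; apply: measurable_bounded_integrable => //.
  exact: (le_lt_trans (probability_le1 P measurableT) (ltry 1)).
exists M; split; first exact: num_real.
by move=> N MN x _; exact: le_trans (fM x) (ltW MN).
Qed.

Lemma integrable_unit_interval (f : T -> R) : measurable_fun setT f ->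
  (forall x, 0 <= f x <= 1) -> P.-integrable setT (EFin \o f).
Proof.
move=> mf f01; apply: (integrable_bounded (M := 1)) => // x.
by have /andP[f0 f1] := f01 x; rewrite ger0_norm.
Qed.

Lemma fine_probability_setC_le (S : set T) (delta : R) : measurable S ->
  ((1 - delta)%:E <= P S)%E -> fine (P (~` S)) <= delta.
Proof.
move=> mS; rewrite probability_setC //.
have : (P S <= 1)%E := probability_le1 P mS.
by case: (P S) => [r| |] //=; rewrite !lee_fin; lra.
Qed.

Lemma le_Rintegral_setC (S : set T) (f g : T -> R) : measurable S ->
  measurable_fun setT f -> measurable_fun setT g ->
  (forall x, 0 <= f x <= 1) -> (forall x, 0 <= g x <= 1) ->
  (forall x, S x -> f x <= g x) ->
  \int[P]_(x in setT) f x <= \int[P]_(x in setT) g x + fine (P (~` S)).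
Proof.
move=> mS mf mg f01 g01 fg; have mSC := measurableC mS.
have mI : measurable_fun setT (\1_(~` S) : T -> R) by exact: measurable_indic.
have I01 x : 0 <= (\1_(~` S) x : R) <= 1.
  by rewrite indicE; case: (_ \in _); rewrite ?lexx ?ler01.
rewrite -(setIT (~` S)) -Rintegral_indic // -RintegralD //;
  try exact: integrable_unit_interval.
apply: le_Rintegral => //; first exact: integrable_unit_interval.
  apply: (integrable_bounded (M := 2)); first exact: measurable_funD.
  move=> x; case/andP: (g01 x) => g0 g1; case/andP: (I01 x) => I0 I1.
  rewrite ger0_norm ?addr_ge0 //; lra.
move=> x _; rewrite indicE; have [Sx|nSx] := pselect (S x).
  by rewrite memNset ?addr0 ?fg // => /(_ Sx).
have /andP[_ f1] := f01 x; have /andP[g0 _] := g01 x.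
by rewrite mem_set //= mulr1n (le_trans f1) // lerDr.
Qed.

End probability_integral.

Lemma trunc01_le (R : realType) (a b : R) : 0 <= b -> a <= b -> trunc01 a <= b.
Proof. by move=> b0 ab; rewrite /trunc01 ge_min ge_max b0 ab orbT. Qed.

Section label_indicator.
Context {R : realType} {dXh dY : measure_display}.
Context {Xh : measurableType dXh} {Y : measurableType dY} {AP : Type}.
Variables (hh : Xh -> Y) (L : Y -> set AP) (alpha : conj_formula AP).

Lemma measurable_sat_conj : (forall p, measurable [set y | L y p]) ->
  measurable [set y | sat_conj (L y) alpha].
Proof.
move=> mL; elim: alpha => [|[p b] al IH].
  by rewrite (_ : [set y | _] = setT) //; apply/seteqP; split => y // _ lit [].
rewrite (_ : [set y | _] = (if b then [set y | L y p] else ~` [set y | L y p])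
   `&` [set y | sat_conj (L y) al]).
  by apply: measurableI => //; case: b => //; exact: measurableC.
apply/seteqP; split => y /=.
  move=> sat; split; last by move=> lit al_lit; apply: sat; right.
  have /= := sat (p, b) (or_introl erefl); clear sat.
  by case: b => -[Lp pL]; [exact: pL | move/Lp].
by move=> [Lp sat] lit [<-|]; [case: b Lp | exact: sat].
Qed.

Lemma Lind_indic :
  Lind R hh L alpha = \1_(hh @^-1` [set y | sat_conj (L y) alpha]).
Proof.
apply/funext => z; rewrite indicE /Lind.
by case: asboolP => sat; [rewrite mem_set | rewrite memNset].
Qed.

Lemma measurable_Lind : measurable_fun setT hh ->
  (forall p, measurable [set y | L y p]) ->
  measurable_fun setT (Lind R hh L alpha).
Proof.
move=> mhh mL; rewrite Lind_indic; apply: measurable_indic.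
by rewrite -[_ @^-1` _]setTI; apply: mhh => //; exact: measurable_sat_conj.
Qed.

Lemma Lind_ge0 z : 0 <= Lind R hh L alpha z.
Proof. by rewrite /Lind; case: asboolP; rewrite ?ler01. Qed.

Lemma Lind_mul_unit_interval z (v : R) : 0 <= v <= 1 ->
  0 <= Lind R hh L alpha z * v <= 1.
Proof.
by move=> /andP[v0 v1]; rewrite /Lind; case: asboolP;
  rewrite ?mul1r ?mul0r ?v0 ?v1 ?lexx ?ler01.
Qed.

End label_indicator.

Theorem lemma1 (R : realType)
  (dX dU dXh dUh dY : measure_display)
  (X : measurableType dX) (U : measurableType dU)
  (Xh : measurableType dXh) (Uh : measurableType dUh) (Y : measurableType dY)
  (dist : Y -> Y -> R) (dist_metric : is_metric dist)
  (T : R.-pker (X * U)%type ~> X) (x0 : X) (h : X -> Y) (h_meas : measurable_fun setT h)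
  (Th : R.-pker (Xh * Uh)%type ~> Xh) (xh0 : Xh) (hh : Xh -> Y)
  (hh_meas : measurable_fun setT hh)
  (AP : Type) (L : Y -> set AP) (L_meas : forall p : AP, measurable [set y | L y p])
  (alpha : conj_formula AP)
  (delta : R)
  (Rel : set (Xh * X)) (Uif : Uh -> Xh -> X -> probability U R)
  (W : Uh -> Xh -> X -> probability (Xh * X)%type R)
  (Hsim : sim_rel dist T x0 h Th xh0 hh 0 delta Rel Uif W)
  (Q : Type) (q : Q) (pi : Xh -> Uh)
  (vc : Xh -> X -> Q -> R) (va : Xh -> Q -> R)
  (vc_meas : measurable_fun setT (fun z : Xh * X => vc z.1 z.2 q))
  (va_meas : measurable_fun setT (fun y : Xh => va y q))
  (vc01 : forall xh x, 0 <= vc xh x q <= 1)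
  (va01 : forall xh, 0 <= va xh q <= 1)
  (Hv : forall xh x, Rel (xh, x) -> vc xh x q >= va xh q) :
  forall xh x, Rel (xh, x) ->
    Tcoupled hh L alpha W pi vc xh x q >= Trobust hh L alpha Th pi delta va xh q.
Proof.
move=> xh x Rxhx.
case: Hsim => mRel _ _ /(_ (pi xh) xh x Rxhx) [W_fst _ W_Rel].
set P := W (pi xh) xh x.
have mLind := measurable_Lind (R := R) alpha hh_meas L_meas.
have mLind_fst : measurable_fun setT (fun z : Xh * X => Lind R hh L alpha z.1).
  exact: measurableT_comp mLind measurable_fst.
have mva_fst : measurable_fun setT (fun z : Xh * X => va z.1 q).
  exact: measurableT_comp va_meas measurable_fst.
have Tabs_marginal : Tabs hh L alpha Th pi va xh q =
    \int[P]_(z in setT) (Lind R hh L alpha z.1 * va z.1 q).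
  rewrite /Tabs -(Rintegral_fst W_fst) //.
  - exact: measurable_funM.
  - by move=> y; case/andP: (Lind_mul_unit_interval hh L alpha y (va01 y)).
have Lva_le_Lvc (z : Xh * X) : Rel z ->
    Lind R hh L alpha z.1 * va z.1 q <= Lind R hh L alpha z.1 * vc z.1 z.2 q.
  by case: z => u y Ruy; apply: ler_wpM2l (Hv u y Ruy); exact: Lind_ge0.
have coupling_gap := le_Rintegral_setC P mRel
  (measurable_funM mLind_fst mva_fst) (measurable_funM mLind_fst vc_meas)
  (fun z => Lind_mul_unit_interval hh L alpha z.1 (va01 z.1))
  (fun z => Lind_mul_unit_interval hh L alpha z.1 (vc01 z.1 z.2))
  Lva_le_Lvc.
apply: trunc01_le.
  apply: Rintegral_ge0 => z _.
  by case/andP: (Lind_mul_unit_interval hh L alpha z.1 (vc01 z.1 z.2)).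
have := fine_probability_setC_le mRel W_Rel.
move: coupling_gap; rewrite /Tcoupled Tabs_marginal /=.
lra.
Qed.
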